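(* Assume the semi-classical setting described in the context, with polynomials $W\not\equiv 0$, $V$, $U$ such that $W f' = 2Vf + U$. For $n\ge 1$ define the formal Laurent series (in powers of $z$, finitely many positive powers) $$\Theta_n = W\,(\varepsilon_n p_n' - \varepsilon_n' p_n) + 2V\varepsilon_n p_n,\qquad \Omega_n = a_n W\,(\varepsilon_{n-1}p_n' - \varepsilon_n' p_{n-1}) + a_n V\,(\varepsilon_{n-1}p_n + \varepsilon_n p_{n-1}).$$ Then $\Theta_n$ and $\Omega_n$ are polynomials in $z$ (all coefficients of negative powers of $z$ vanish), $\deg\Theta_n\le \max(\deg W-2,\deg V-1)$, and $\deg \Omega_n\le\max(\deg W-1,\deg V)$. Moreover, $\Theta_n = W\,[p_{n-1}^{(1)\prime}p_n - p_n' p_{n-1}^{(1)}] - 2V p_{n-1}^{(1)}p_n - U p_n^2$. If in addition $W(z)=\prod_{k=1}^m (z-x_k)$ with $m\ge 2$ and $2V(z) = W(z)\sum_{k=1}^m \alpha_k/(z-x_k)$, then $$\Theta_n(z) = \Big(2n+1+\sum_{k=1}^m\alpha_k\Big)z^{m-2} + (\text{lower powers}),\qquad \Omega_n(z) = \Big(n+\tfrac12\sum_{k=1}^m\alpha_k\Big)z^{m-1} + (\text{lower powers}).$$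
   Context: Let $(\mu_k)_{k\ge 0}$ be complex numbers such that all Hankel determinants $\det(\mu_{i+j})_{0\le i,j\le n}$, $n\ge 0$, are nonzero. Let $\mathcal L$ be the linear functional on polynomials with $\mathcal L(x^k)=\mu_k$, and let $p_n(z)=\gamma_n z^n+\cdots$ ($\gamma_n\neq 0$) be the orthonormal polynomials: $\mathcal L(p_np_m)=\delta_{n,m}$. They satisfy $a_{n+1}p_{n+1}(z)=(z-b_n)p_n(z)-a_np_{n-1}(z)$ ($n\ge0$, $p_{-1}=0$) with $a_n=\gamma_{n-1}/\gamma_n$. Let $f(z)=\sum_{k\ge0}\mu_k z^{-k-1}$ (formal series in $1/z$). For $n\ge0$ let $p^{(1)}_{n-1}$ be the polynomial part of $f p_n$ and $\varepsilon_n = f p_n - p^{(1)}_{n-1}$, a formal series of the form $\gamma_n^{-1}z^{-n-1}+O(z^{-n-2})$. Primes denote $d/dz$. The setting is semi-classical if there are polynomials $W\not\equiv0$, $V$, $U$ with $Wf'=2Vf+U$ (as formal series). *)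

From HB Require Import structures.
From mathcomp Require Import all_boot all_order all_algebra.
Set Implicit Arguments. Unset Strict Implicit. Unset Printing Implicit Defensive.
Import Order.TTheory GRing.Theory Num.Theory.
Local Open Scope ring_scope.

Section Defs.
Variable C : numClosedFieldType.

(* A formal Laurent series  sum_k s k z^k  is represented by its coefficient
   function s : int -> C.  All series used here have finitely many positive
   powers; the only products needed are polynomial * series, which are always
   finite sums. *)
Definition lser := int -> C.

Definition ofpoly (q : {poly C}) : lser :=
  fun k => match k with Posz i => q`_i | Negz _ => 0 end.

(* f(z) = sum_{j>=0} mu_j z^{-j-1}  (Negz j = -(j+1)) *)
Definition fser (mu : nat -> C) : lser :=
  fun k => match k with Posz _ => 0 | Negz j => mu j end.

Definition pmul (q : {poly C}) (s : lser) : lser :=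
  fun k => \sum_(i < size q) q`_i * s (k - (i%:Z)).

Definition sderiv (s : lser) : lser := fun k => (k + 1)%:~R * s (k + 1).

Definition sadd (s t : lser) : lser := fun k => s k + t k.
Definition ssub (s t : lser) : lser := fun k => s k - t k.
Definition sscale (c : C) (s : lser) : lser := fun k => c * s k.

(* the polynomial with coefficients s_0, ..., s_{N-1}; this is the polynomial
   part of s whenever s has no nonzero coefficient of z^k for k >= N *)
Definition ppart (N : nat) (s : lser) : {poly C} := \poly_(i < N) s (Posz i).

Definition Lfun (mu : nat -> C) (q : {poly C}) : C :=
  \sum_(i < size q) q`_i * mu i.

Definition hankel (mu : nat -> C) (n : nat) : C :=
  \det (\matrix_(i < n.+1, j < n.+1) mu (i + j)%N).

(* p^{(1)}_{n-1} := polynomial part of f p_n (f has only negative powers,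
   so f p_n has no power z^k with k >= size p_n) *)
Definition passoc (mu : nat -> C) (pn : {poly C}) : {poly C} :=
  ppart (size pn) (pmul pn (fser mu)).

Definition epsn (mu : nat -> C) (pn : {poly C}) : lser :=
  ssub (pmul pn (fser mu)) (ofpoly (passoc mu pn)).

Definition acoef (p : nat -> {poly C}) (n : nat) : C :=
  lead_coef (p n.-1) / lead_coef (p n).

Definition Theta (mu : nat -> C) (p : nat -> {poly C}) (W V : {poly C})
    (n : nat) : lser :=
  sadd (pmul W (ssub (pmul (p n)^`() (epsn mu (p n)))
                     (pmul (p n) (sderiv (epsn mu (p n))))))
       (pmul (2%:R *: V) (pmul (p n) (epsn mu (p n)))).

Definition Omega (mu : nat -> C) (p : nat -> {poly C}) (W V : {poly C})
    (n : nat) : lser :=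
  sadd (sscale (acoef p n)
          (pmul W (ssub (pmul (p n)^`() (epsn mu (p n.-1)))
                        (pmul (p n.-1) (sderiv (epsn mu (p n)))))))
       (sscale (acoef p n)
          (pmul V (sadd (pmul (p n) (epsn mu (p n.-1)))
                        (pmul (p n.-1) (epsn mu (p n)))))).

(* degree with deg 0 = -1 (only used in bounds "coefficient of z^k vanishes
   for k > bound", where this convention is harmless) *)
Definition degz (q : {poly C}) : int := (size q)%:Z - 1.

End Defs.

From HB Require Import structures.
From mathcomp Require Import all_boot all_order all_algebra.
From mathcomp Require Import zify ring.
From Stdlib Require Import FunctionalExtensionality.
Import Order.TTheory GRing.Theory Num.Theory.
Local Open Scope ring_scope.
Set Implicit Arguments. Unset Strict Implicit.

(* Every series occurring in Theta_n and Omega_n is of the form a f + c f' + b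
   with polynomials a, b, c.  When c is a multiple of W, the semi-classical
   equation W f' = 2 V f + U removes f', and in Theta_n and Omega_n the
   resulting coefficient of f cancels, so both are polynomials.  Orthogonality
   gives eps_n = gamma_n^-1 z^(-n-1) + O(z^(-n-2)), so
     eps_n p_n' - eps_n' p_n = (2n+1) z^-2 + ...,    p_n eps_n = z^-1 + ...,
     a_n (eps_(n-1) p_n' - eps_n' p_(n-1)) = n z^-1 + ...,
     a_n (eps_(n-1) p_n + eps_n p_(n-1)) = 1 + ...,
   and multiplying by W and V yields the degree bounds and top coefficients. *)

Section LaurentSeries.
Variable C : numClosedFieldType.
Implicit Types (q r : {poly C}) (s t : lser C).

Lemma pmulE q s k N : (size q <= N)%N ->
  pmul q s k = \sum_(i < N) q`_i * s (k - i%:Z).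
Proof.
move=> hN; rewrite /pmul (big_ord_widen N (fun i => q`_i * s (k - i%:Z)) hN).
rewrite [RHS](bigID (fun i : 'I_N => (i < size q)%N)) /= [X in _ = _ + X]big1 ?addr0 //.
by move=> i; rewrite -leqNgt => h; rewrite nth_default // mul0r.
Qed.

Lemma pmul0 s : pmul 0 s = fun _ => 0.
Proof. by apply: functional_extensionality => k; rewrite /pmul size_poly0 big_ord0. Qed.

Lemma pmulD q r s : pmul (q + r) s = sadd (pmul q s) (pmul r s).
Proof.
apply: functional_extensionality => k; rewrite /sadd.
set N := maxn (size q) (size r).
have hq : (size q <= N)%N by rewrite leq_maxl.
have hr : (size r <= N)%N by rewrite leq_maxr.
have hqr : (size (q + r)%R <= N)%N.
  by apply: leq_trans (size_polyD _ _) _; rewrite geq_max hq hr.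
rewrite (pmulE _ _ hq) (pmulE _ _ hr) (pmulE _ _ hqr) -big_split /=.
by apply: eq_bigr => i _; rewrite coefD mulrDl.
Qed.

Lemma pmulZ c q s : pmul (c *: q) s = sscale c (pmul q s).
Proof.
apply: functional_extensionality => k; rewrite /sscale.
rewrite (pmulE _ _ (size_scale_leq c q)) /pmul big_distrr /=.
by apply: eq_bigr => i _; rewrite coefZ mulrA.
Qed.

Lemma pmulN q s : pmul (- q) s = sscale (-1) (pmul q s).
Proof. by rewrite -scaleN1r pmulZ. Qed.

Lemma pmul_polyC c s : pmul c%:P s = sscale c s.
Proof.
apply: functional_extensionality => k; rewrite /sscale (pmulE _ _ (size_polyC_leq1 c)).
by rewrite big_ord1 coefC /= subr0.
Qed.

Lemma pmulMX q s k : pmul (q * 'X) s k = pmul q s (k - 1).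
Proof.
have hs : (size (q * 'X)%R <= (size q).+1)%N.
  by rewrite (leq_trans (size_polyMleq _ _)) // size_polyX addn2.
rewrite (pmulE _ _ hs) big_ord_recl coefMX /= mul0r add0r /pmul.
apply: eq_bigr => i _; rewrite coefMX /= /bump /=; congr (_ * s _); lia.
Qed.

Lemma pmulA q r s : pmul (q * r) s = pmul q (pmul r s).
Proof.
elim/poly_ind: q => [|q c IH]; first by rewrite mul0r !pmul0.
apply: functional_extensionality => k.
rewrite mulrDl mulrAC mul_polyC pmulD pmulZ /sadd /sscale pmulMX IH.
by rewrite pmulD /sadd pmulMX pmul_polyC.
Qed.

Lemma pmul_XnM j q s k : pmul ('X^j * q) s k = pmul q s (k - j%:Z).
Proof.
elim: j k => [|j IH] k; first by rewrite expr0 mul1r subr0.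
rewrite exprSr mulrAC pmulMX IH; congr (pmul _ _ _); lia.
Qed.

Lemma pmul_sadd q s t : pmul q (sadd s t) = sadd (pmul q s) (pmul q t).
Proof.
apply: functional_extensionality => k; rewrite /pmul /sadd -big_split /=.
by apply: eq_bigr => i _; rewrite mulrDr.
Qed.

Lemma ofpoly0 : ofpoly 0 = (fun _ => 0 : C).
Proof. by apply: functional_extensionality => -[i|i] //=; rewrite coef0. Qed.

Lemma ofpolyD q r : ofpoly (q + r) = sadd (ofpoly q) (ofpoly r).
Proof. by apply: functional_extensionality => -[i|i] /=; rewrite /sadd ?coefD ?addr0. Qed.

Lemma ofpolyZ x q : ofpoly (x *: q) = sscale x (ofpoly q).
Proof. by apply: functional_extensionality => -[i|i] /=; rewrite /sscale ?coefZ ?mulr0. Qed.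

Lemma ofpolyN q : ofpoly (- q) = sscale (-1) (ofpoly q).
Proof. by rewrite -scaleN1r ofpolyZ. Qed.

Lemma ofpoly_neg q k : k < 0 -> ofpoly q k = 0.
Proof. by case: k => [i|i] //=; lia. Qed.

Lemma pmul_ofpoly q r : pmul q (ofpoly r) = ofpoly (q * r).
Proof.
elim/poly_ind: q => [|q c IH]; first by rewrite mul0r pmul0 ofpoly0.
apply: functional_extensionality => k.
rewrite pmulD /sadd pmulMX IH pmul_polyC /sscale mulrDl mulrAC mul_polyC.
case: k => [i|i] /=; last by rewrite mulr0 addr0; case: i.
rewrite coefD coefMX coefZ; case: i => [|i] //=.
by rewrite subn1.
Qed.

Lemma sderiv_sadd s t : sderiv (sadd s t) = sadd (sderiv s) (sderiv t).
Proof. by apply: functional_extensionality => k; rewrite /sderiv /sadd mulrDr. Qed.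

Lemma sderiv_sscale c s : sderiv (sscale c s) = sscale c (sderiv s).
Proof. by apply: functional_extensionality => k; rewrite /sderiv /sscale mulrCA. Qed.

Lemma sderiv_pmul q s : sderiv (pmul q s) = sadd (pmul q^`() s) (pmul q (sderiv s)).
Proof.
elim/poly_ind: q => [|q c IH].
  rewrite deriv0 !pmul0; apply: functional_extensionality => k.
  by rewrite /sderiv /sadd mulr0 addr0.
apply: functional_extensionality => k.
rewrite derivMXaddC (pmulD (q * 'X) _ s) sderiv_sadd pmul_polyC sderiv_sscale.
rewrite !pmulD pmul_polyC /sadd /sscale.
have IHk := congr1 (fun f => f (k - 1)) IH; rewrite /sadd /= in IHk.
rewrite !pmulMX -addrA [X in _ = _ + X]addrA -IHk /sderiv pmulMX.
have -> : (k + 1 - 1 = k)%R by lia.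
have -> : (k - 1 + 1 = k)%R by lia.
rewrite intrD; ring.
Qed.

Lemma sderiv_ofpoly q : sderiv (ofpoly q) = ofpoly q^`().
Proof.
apply: functional_extensionality => -[i|[|i]]; rewrite /sderiv /=.
- have -> : (Posz i + 1 = Posz i.+1)%R by lia.
  by rewrite coef_deriv /= mulr_natl addn1.
- have -> : (Negz 0 + 1 = 0)%R by lia.
  by rewrite mul0r.
- have -> : (Negz i.+1 + 1 = Negz i)%R by lia.
  by rewrite mulr0.
Qed.

Definition vanishes_above s (K : int) := forall k, K < k -> s k = 0.

Lemma vanishes_above_le s K K' : K <= K' -> vanishes_above s K -> vanishes_above s K'.
Proof. by move=> hK hs k hk; apply: hs; lia. Qed.

Lemma vanishes_above_sadd s t K :
  vanishes_above s K -> vanishes_above t K -> vanishes_above (sadd s t) K.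
Proof. by move=> hs ht k hk; rewrite /sadd hs ?ht ?addr0. Qed.

Lemma vanishes_above_ssub s t K :
  vanishes_above s K -> vanishes_above t K -> vanishes_above (ssub s t) K.
Proof. by move=> hs ht k hk; rewrite /ssub hs ?ht ?subr0. Qed.

Lemma vanishes_above_sscale x s K : vanishes_above s K -> vanishes_above (sscale x s) K.
Proof. by move=> hs k hk; rewrite /sscale hs ?mulr0. Qed.

Lemma vanishes_above_sderiv s K : vanishes_above s K -> vanishes_above (sderiv s) (K - 1).
Proof. by move=> hs k hk; rewrite /sderiv hs ?mulr0 //; lia. Qed.

Lemma sderiv_top s K : sderiv s (K - 1) = K%:~R * s K.
Proof. by rewrite /sderiv; have -> : (K - 1 + 1 = K)%R by lia. Qed.

Lemma vanishes_above_pmul q s K K' : K + (size q)%:Z - 1 <= K' ->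
  vanishes_above s K -> vanishes_above (pmul q s) K'.
Proof.
move=> hK hs k hk; rewrite /pmul big1 // => i _.
by rewrite hs ?mulr0 //; have := ltn_ord i; lia.
Qed.

Lemma pmul_top q s K N k : (size q <= N.+1)%N -> vanishes_above s K ->
  K + N%:Z = k -> pmul q s k = q`_N * s K.
Proof.
move=> hq hs <-; rewrite (pmulE _ _ hq) big_ord_recr /= big1 ?add0r.
  by congr (_ * s _); lia.
by move=> i _; rewrite hs ?mulr0 //; have := ltn_ord i; lia.
Qed.

End LaurentSeries.

Section MomentSeries.
Variable C : numClosedFieldType.
Variable mu : nat -> C.
Implicit Types (q r a b c : {poly C}).
Local Notation f := (fser mu).

Definition fcomb a b c : lser C := sadd (pmul a f) (sadd (pmul c (sderiv f)) (ofpoly b)).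

Lemma pmul_fcomb q a b c : pmul q (fcomb a b c) = fcomb (q * a) (q * b) (q * c).
Proof. by rewrite /fcomb !pmul_sadd !pmulA pmul_ofpoly. Qed.

Lemma fcombD a b c a' b' c' :
  sadd (fcomb a b c) (fcomb a' b' c') = fcomb (a + a') (b + b') (c + c').
Proof.
rewrite /fcomb !pmulD ofpolyD; apply: functional_extensionality => k; rewrite /sadd; ring.
Qed.

Lemma fcombB a b c a' b' c' :
  ssub (fcomb a b c) (fcomb a' b' c') = fcomb (a - a') (b - b') (c - c').
Proof.
rewrite /fcomb !pmulD !pmulN ofpolyD ofpolyN.
by apply: functional_extensionality => k; rewrite /sadd /ssub /sscale; ring.
Qed.

Lemma fcombZ x a b c :
  sscale x (fcomb a b c) = fcomb (x%:P * a) (x%:P * b) (x%:P * c).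
Proof.
rewrite /fcomb !mul_polyC !pmulZ ofpolyZ.
by apply: functional_extensionality => k; rewrite /sadd /sscale; ring.
Qed.

Lemma sderiv_fcomb a b : sderiv (fcomb a b 0) = fcomb a^`() b^`() a.
Proof.
rewrite /fcomb !sderiv_sadd sderiv_pmul pmul0 sderiv_ofpoly.
by apply: functional_extensionality => k; rewrite /sadd /sderiv; ring.
Qed.

Lemma fcomb_semiclassical W V U a b c c0 :
  pmul W (sderiv f) = sadd (pmul (2%:R *: V) f) (ofpoly U) ->
  c = W * c0 -> a + c0 * (2%:R *: V) = 0 -> fcomb a b c = ofpoly (b + c0 * U).
Proof.
move=> hsc -> /eqP; rewrite addr_eq0 => /eqP ->.
rewrite /fcomb [W * c0]mulrC pmulA hsc !pmul_sadd -pmulA pmul_ofpoly pmulN ofpolyD.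
by apply: functional_extensionality => k; rewrite /sadd /sscale; ring.
Qed.

Lemma epsn_fcomb pn : epsn mu pn = fcomb pn (- passoc mu pn) 0.
Proof.
rewrite /epsn /fcomb pmul0 ofpolyN.
by apply: functional_extensionality => k; rewrite /sadd /ssub /sscale; ring.
Qed.

Lemma LfunE q : Lfun mu q = pmul q f (-1).
Proof.
rewrite /Lfun /pmul; apply: eq_bigr => i _.
by have -> : (-1 - (i : nat)%:Z = Negz i)%R by lia.
Qed.

Lemma Lfun0 : Lfun mu 0 = 0.
Proof. by rewrite LfunE pmul0. Qed.

Lemma LfunD q r : Lfun mu (q + r) = Lfun mu q + Lfun mu r.
Proof. by rewrite !LfunE pmulD. Qed.

Lemma LfunZ x q : Lfun mu (x *: q) = x * Lfun mu q.
Proof. by rewrite !LfunE pmulZ. Qed.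

Lemma epsn_Negz pn j : epsn mu pn (Negz j) = Lfun mu ('X^j * pn).
Proof.
rewrite LfunE pmul_XnM /epsn /ssub /= subr0; congr (pmul _ _ _); lia.
Qed.

Lemma epsn_Posz pn i : epsn mu pn (Posz i) = 0.
Proof.
rewrite /epsn /ssub /= /passoc /ppart coef_poly.
case: ltnP => hi; first by rewrite subrr.
rewrite subr0 /pmul big1 // => j _.
have -> : (Posz i - (j : nat)%:Z = Posz (i - j))%R by have := ltn_ord j; lia.
by rewrite /= mulr0.
Qed.

End MomentSeries.

Section Orthonormal.
Variable C : numClosedFieldType.
Variable mu : nat -> C.
Variable p : nat -> {poly C}.
Hypothesis size_p : forall n, size (p n) = n.+1.
Hypothesis orthonormal_p : forall n m, Lfun mu (p n * p m) = (n == m)%:R.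

Definition eps_wronskian n : lser C :=
  ssub (pmul (p n)^`() (epsn mu (p n))) (pmul (p n) (sderiv (epsn mu (p n)))).
Definition eps_prod n : lser C := pmul (p n) (epsn mu (p n)).
Definition eps_cross_wronskian n : lser C :=
  ssub (pmul (p n)^`() (epsn mu (p n.-1))) (pmul (p n.-1) (sderiv (epsn mu (p n)))).
Definition eps_cross_sum n : lser C :=
  sadd (pmul (p n) (epsn mu (p n.-1))) (pmul (p n.-1) (epsn mu (p n))).

Lemma lead_coef_p n : lead_coef (p n) = (p n)`_n.
Proof. by rewrite lead_coefE size_p. Qed.

Lemma lead_coef_p_neq0 n : lead_coef (p n) != 0.
Proof. by rewrite lead_coef_eq0 -size_poly_eq0 size_p. Qed.

Lemma p_neq0 n : p n != 0.
Proof. by rewrite -size_poly_eq0 size_p. Qed.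

Lemma size_deriv_p n : (size (p n.+1)^`() <= n.+1)%N.
Proof. by have := lt_size_deriv (p_neq0 n.+1); rewrite size_p. Qed.

Lemma Lfun_orthogonal N (r : {poly C}) : (size r <= N)%N -> Lfun mu (r * p N) = 0.
Proof.
move=> hr; have {hr} [n [hn hr]] : exists n, (n <= N)%N /\ (size r <= n)%N by exists N.
elim: n r hn hr => [|n IH] r hn hr.
  by move: hr; rewrite leqn0 size_poly_eq0 => /eqP ->; rewrite mul0r Lfun0.
set c := r`_n / lead_coef (p n).
have hr' : (size (r - c *: p n)%R <= n)%N.
  apply/leq_sizeP => j hj; rewrite coefB coefZ.
  case: (ltngtP j n) => hjn; first by move: hj; rewrite leqNgt hjn.
    have h1 : (size r <= j)%N by rewrite (leq_trans hr).
    have h2 : (size (p n) <= j)%N by rewrite size_p.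
    by rewrite (nth_default _ h1) (nth_default _ h2) mulr0 subr0.
  by rewrite hjn /c -lead_coef_p divfK ?subrr // lead_coef_p_neq0.
have -> : r = (r - c *: p n) + c *: p n by rewrite subrK.
rewrite mulrDl LfunD IH ?(ltnW hn) // add0r -scalerAl LfunZ orthonormal_p.
by rewrite (ltn_eqF hn) mulr0.
Qed.

Lemma epsn_vanishes_above N : vanishes_above (epsn mu (p N)) (- (N.+1)%:Z).
Proof.
move=> [i|j] hk; first exact: epsn_Posz.
rewrite epsn_Negz Lfun_orthogonal // size_polyXn; lia.
Qed.

(* [L(p_N^2) = 1] and only the leading term of [p_N] survives against [p_N]. *)
Lemma epsn_top N : lead_coef (p N) * epsn mu (p N) (- (N.+1)%:Z) = 1.
Proof.
have -> : (- (N.+1)%:Z = Negz N)%R by lia.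
rewrite epsn_Negz; set g := lead_coef (p N).
have hr : (size (p N - g *: 'X^N)%R <= N)%N.
  apply/leq_sizeP => j hj; rewrite coefB coefZ coefXn.
  case: (ltngtP j N) => hjn; first by move: hj; rewrite leqNgt hjn.
    by rewrite nth_default ?size_p // mulr0 subrr.
  by rewrite hjn ?eqxx mulr1 /g lead_coef_p subrr.
have := orthonormal_p N N; rewrite eqxx.
have -> : p N * p N = (p N - g *: 'X^N) * p N + g *: ('X^N * p N).
  by rewrite scalerAl -mulrDl subrK.
by rewrite LfunD Lfun_orthogonal // add0r LfunZ.
Qed.

Lemma eps_wronskian_top N :
  vanishes_above (eps_wronskian N.+1) (-2) /\ eps_wronskian N.+1 (-2) = (2 * N.+1 + 1)%:R.
Proof.
have he := @epsn_vanishes_above N.+1; have ht := @epsn_top N.+1.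
have hs : (size (p N.+1) <= N.+2)%N by rewrite size_p.
have hs' := size_deriv_p N.
split.
  apply: vanishes_above_ssub; first by apply: vanishes_above_pmul he; lia.
  by apply: vanishes_above_pmul (vanishes_above_sderiv he); lia.
rewrite /eps_wronskian /ssub (pmul_top hs' he); last by lia.
rewrite (pmul_top hs (vanishes_above_sderiv he)); last by lia.
rewrite sderiv_top coef_deriv -lead_coef_p mulrNz.
move: ht; set g := lead_coef (p N.+1); set c := epsn mu (p N.+1) _ => ht.
rewrite -[g *+ _]mulr_natr.
by transitivity ((2 * N.+1 + 1)%:R * (g * c)); [ring | rewrite ht mulr1].
Qed.

Lemma eps_prod_top n : vanishes_above (eps_prod n) (-1) /\ eps_prod n (-1) = 1.
Proof.
have he := @epsn_vanishes_above n.
have hs : (size (p n) <= n.+1)%N by rewrite size_p.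
split; first by apply: vanishes_above_pmul he; lia.
by rewrite /eps_prod (pmul_top hs he) -?lead_coef_p ?epsn_top //; lia.
Qed.

Lemma eps_cross_wronskian_top N : vanishes_above (eps_cross_wronskian N.+1) (-1) /\
  acoef p N.+1 * eps_cross_wronskian N.+1 (-1) = N.+1%:R.
Proof.
have he := @epsn_vanishes_above N.+1; have he1 := @epsn_vanishes_above N.
have hs' := size_deriv_p N.
have hsN : (size (p N) <= N.+1)%N by rewrite size_p.
have v2 : vanishes_above (pmul (p N) (sderiv (epsn mu (p N.+1)))) (-3).
  by apply: vanishes_above_pmul (vanishes_above_sderiv he); lia.
have v1 : vanishes_above (pmul (p N.+1)^`() (epsn mu (p N))) (-1).
  by apply: vanishes_above_pmul he1; lia.
split; first by apply: vanishes_above_ssub v1 (vanishes_above_le _ v2).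
rewrite /eps_cross_wronskian /ssub (v2 (-1)) // subr0 (pmul_top hs' he1); last by lia.
rewrite coef_deriv -lead_coef_p /acoef /=.
have := @epsn_top N; set g1 := lead_coef (p N); set c := epsn mu (p N) _ => ht.
have hg := lead_coef_p_neq0 N.+1; set g := lead_coef (p N.+1) in hg *.
rewrite -[g *+ _]mulr_natr.
by transitivity (N.+1%:R * (g1 * c) * (g / g)); [field | rewrite ht divff // !mulr1].
Qed.

Lemma eps_cross_sum_top N : vanishes_above (eps_cross_sum N.+1) 0 /\
  acoef p N.+1 * eps_cross_sum N.+1 0 = 1.
Proof.
have he := @epsn_vanishes_above N.+1; have he1 := @epsn_vanishes_above N.
have hs : (size (p N.+1) <= N.+2)%N by rewrite size_p.
have v2 : vanishes_above (pmul (p N) (epsn mu (p N.+1))) (-2).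
  by apply: vanishes_above_pmul he; rewrite size_p; lia.
have v1 : vanishes_above (pmul (p N.+1) (epsn mu (p N))) 0.
  by apply: vanishes_above_pmul he1; rewrite size_p; lia.
split; first by apply: vanishes_above_sadd v1 (vanishes_above_le _ v2).
rewrite /eps_cross_sum /sadd (v2 0) // addr0 (pmul_top hs he1); last by lia.
rewrite -lead_coef_p /acoef /=.
have := @epsn_top N; set g1 := lead_coef (p N); set c := epsn mu (p N) _ => ht.
have hg := lead_coef_p_neq0 N.+1; set g := lead_coef (p N.+1) in hg *.
by transitivity ((g1 * c) * (g / g)); [field | rewrite ht divff // mulr1].
Qed.

Variables W V U : {poly C}.
Hypothesis semiclassical :
  pmul W (sderiv (fser mu)) = sadd (pmul (2%:R *: V) (fser mu)) (ofpoly U).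

Lemma ThetaE n : Theta mu p W V n =
  sadd (pmul W (eps_wronskian n)) (pmul (2%:R *: V) (eps_prod n)).
Proof. by []. Qed.

Lemma OmegaE n : Omega mu p W V n =
  sadd (sscale (acoef p n) (pmul W (eps_cross_wronskian n)))
       (sscale (acoef p n) (pmul V (eps_cross_sum n))).
Proof. by []. Qed.

Lemma Theta_polyE n :
  Theta mu p W V n =
    ofpoly (W * ((passoc mu (p n))^`() * p n - (p n)^`() * passoc mu (p n))
            - 2%:R *: V * passoc mu (p n) * p n - U * (p n) ^+ 2).
Proof.
rewrite /Theta !epsn_fcomb sderiv_fcomb !pmul_fcomb fcombB pmul_fcomb fcombD.
by rewrite (fcomb_semiclassical (c0 := - (p n * p n)) _ semiclassical);
  [congr ofpoly | |]; ring.
Qed.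

Lemma Omega_is_poly n : exists b, Omega mu p W V n = ofpoly b.
Proof.
eexists; rewrite /Omega !epsn_fcomb sderiv_fcomb !pmul_fcomb fcombB fcombD.
rewrite !pmul_fcomb !fcombZ fcombD.
rewrite (fcomb_semiclassical (c0 := - ((acoef p n)%:P * p n.-1 * p n)) _ semiclassical) //.
  by ring.
by rewrite scaler_nat mulr2n; ring.
Qed.

Lemma Theta_vanishes_above N K : (size W)%:Z <= K + 3 -> (size V)%:Z <= K + 2 ->
  vanishes_above (Theta mu p W V N.+1) K.
Proof.
move=> hW hV; have [vW _] := @eps_wronskian_top N; have [vV _] := @eps_prod_top N.+1.
rewrite ThetaE pmulZ; apply: vanishes_above_sadd; last apply: vanishes_above_sscale.
  by apply: vanishes_above_pmul vW; lia.
by apply: vanishes_above_pmul vV; lia.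
Qed.

Lemma Omega_vanishes_above N K : (size W)%:Z <= K + 2 -> (size V)%:Z <= K + 1 ->
  vanishes_above (Omega mu p W V N.+1) K.
Proof.
move=> hW hV; have [vW _] := @eps_cross_wronskian_top N; have [vV _] := @eps_cross_sum_top N.
rewrite OmegaE; apply: vanishes_above_sadd; apply: vanishes_above_sscale.
  by apply: vanishes_above_pmul vW; lia.
by apply: vanishes_above_pmul vV; lia.
Qed.

Lemma Theta_top N m : (size W <= m.+3)%N -> (size V <= m.+2)%N ->
  Theta mu p W V N.+1 m = W`_m.+2 * (2 * N.+1 + 1)%:R + (2%:R *: V)`_m.+1.
Proof.
move=> hW hV; have [vW tW] := @eps_wronskian_top N; have [vV tV] := @eps_prod_top N.+1.
have hV2 : (size (2%:R *: V) <= m.+2)%N by rewrite (leq_trans (size_scale_leq _ _)).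
by rewrite ThetaE /sadd (pmul_top hW vW) ?(pmul_top hV2 vV) ?tW ?tV ?mulr1 //; lia.
Qed.

Lemma Omega_top N m : (size W <= m.+2)%N -> (size V <= m.+1)%N ->
  Omega mu p W V N.+1 m = W`_m.+1 * N.+1%:R + V`_m.
Proof.
move=> hW hV; have [vW tW] := @eps_cross_wronskian_top N.
have [vV tV] := @eps_cross_sum_top N.
rewrite OmegaE /sadd /sscale (pmul_top hW vW) ?(pmul_top hV vV); try lia.
by rewrite mulrCA tW mulrCA tV mulr1.
Qed.

End Orthonormal.

Section PartialFractions.
Variable R : nzRingType.
Variable m : nat.
Variable x : 'I_m -> R.

Lemma size_prod_XsubC_ord : size (\prod_(k < m) ('X - (x k)%:P)) = m.+1.
Proof. by rewrite size_prod_XsubC /index_enum /= -enumT size_enum_ord. Qed.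

Lemma coef_prod_XsubC_ord : (\prod_(k < m) ('X - (x k)%:P))`_m = 1.
Proof.
by have /monicP := monic_prod_XsubC (index_enum 'I_m) predT x; rewrite lead_coefE size_prod_XsubC_ord.
Qed.

Lemma size_prod_XsubC_neq k : size (\prod_(j < m | j != k) ('X - (x j)%:P)) = m.
Proof.
rewrite -big_filter size_prod_XsubC.
have := cardC1 k; rewrite card_ord cardE /enum_mem /index_enum /= => ->.
by rewrite prednK // (leq_ltn_trans (leq0n k) (ltn_ord k)).
Qed.

Lemma coef_prod_XsubC_neq k : (\prod_(j < m | j != k) ('X - (x j)%:P))`_m.-1 = 1.
Proof.
have /monicP := monic_prod_XsubC (index_enum 'I_m) (predC1 k) x.
by rewrite lead_coefE size_prod_XsubC_neq.
Qed.

Variable alpha : 'I_m -> R.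

Lemma size_partial_fraction_num :
  (size (\sum_(k < m) alpha k *: \prod_(j < m | j != k) ('X - (x j)%:P))%R <= m)%N.
Proof.
apply/leq_sizeP => i hi; rewrite coef_sum big1 // => k _.
by rewrite coefZ nth_default ?mulr0 // size_prod_XsubC_neq.
Qed.

Lemma coef_partial_fraction_num :
  (\sum_(k < m) alpha k *: \prod_(j < m | j != k) ('X - (x j)%:P))`_m.-1 = \sum_(k < m) alpha k.
Proof. by rewrite coef_sum; apply: eq_bigr => k _; rewrite coefZ coef_prod_XsubC_neq mulr1. Qed.

End PartialFractions.

Theorem mainTheorem1 (C : numClosedFieldType) (mu : nat -> C)
    (p : nat -> {poly C}) (W V U : {poly C}) :
  (forall n, hankel mu n != 0) ->
  (forall n, size (p n) = n.+1) ->
  (forall n m, Lfun mu (p n * p m) = (n == m)%:R) ->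
  W != 0 ->
  pmul W (sderiv (fser mu)) = sadd (pmul (2%:R *: V) (fser mu)) (ofpoly U) ->
  forall n : nat, (1 <= n)%N ->
    [/\ (forall k : int, k < 0 -> Theta mu p W V n k = 0) /\
        (forall k : int, Num.max (degz W - 2) (degz V - 1) < k ->
                         Theta mu p W V n k = 0),
        (forall k : int, k < 0 -> Omega mu p W V n k = 0) /\
        (forall k : int, Num.max (degz W - 1) (degz V) < k ->
                         Omega mu p W V n k = 0),
        Theta mu p W V n =
          ofpoly (W * ((passoc mu (p n))^`() * p n - (p n)^`() * passoc mu (p n))
                  - 2%:R *: V * passoc mu (p n) * p n - U * (p n) ^+ 2)
      & forall (m : nat) (x alpha : 'I_m -> C),
          (2 <= m)%N ->
          W = \prod_(k < m) ('X - (x k)%:P) ->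
          2%:R *: V = \sum_(k < m) alpha k *: \prod_(j < m | j != k) ('X - (x j)%:P) ->
          [/\ Theta mu p W V n (m%:Z - 2) = (2 * n + 1)%:R + \sum_(k < m) alpha k,
              (forall k : int, m%:Z - 2 < k -> Theta mu p W V n k = 0),
              Omega mu p W V n (m%:Z - 1) = n%:R + (\sum_(k < m) alpha k) / 2%:R
            & (forall k : int, m%:Z - 1 < k -> Omega mu p W V n k = 0)]].
Proof.
(* The Hankel condition only guarantees that [p] exists. *)
move=> _ size_p orth _ sc [//|N] _.
split.
- split=> [k hk|]; first by rewrite (Theta_polyE p sc) ofpoly_neg.
  by apply: (Theta_vanishes_above size_p orth N); rewrite /degz; lia.
- split=> [k hk|]; first by have [b ->] := Omega_is_poly p sc N.+1; rewrite ofpoly_neg.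
  by apply: (Omega_vanishes_above size_p orth N); rewrite /degz; lia.
- exact: Theta_polyE.
case=> [|[|m]] // x alpha _ hW h2V.
have szW : size W = m.+3 by rewrite hW size_prod_XsubC_ord.
have lcW : W`_m.+2 = 1 by rewrite hW coef_prod_XsubC_ord.
have two_neq0 : 2%:R != 0 :> C by rewrite pnatr_eq0.
have szV : (size V <= m.+2)%N.
  by rewrite -(size_scale V two_neq0) h2V size_partial_fraction_num.
have lcV : V`_m.+1 = (\sum_(k < m.+2) alpha k) / 2%:R.
  by rewrite -(coef_partial_fraction_num x) -h2V coefZ [2%:R * _]mulrC mulfK.
have -> : m.+2%:Z - 2 = m by lia.
have -> : m.+2%:Z - 1 = m.+1 by lia.
split.
- by rewrite Theta_top ?szW // lcW h2V coef_partial_fraction_num mul1r.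
- by apply: (Theta_vanishes_above size_p orth N); lia.
- by rewrite Omega_top ?szW // lcW lcV mul1r.
- by apply: (Omega_vanishes_above size_p orth N); lia.
Qed.
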